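(* Let the Mathieu group $M_{24}$ act on its natural $24$-element set $\Theta$, with a distinguished point $F\in\Theta$. Then (a) $hd((M_{24})^{\triangle}_{-})\geq 14$; (b) $M(23,14)\geq |M_{24}|=244{,}823{,}040$; (c) $M(22,14)\geq |M_{24}|/23=10{,}644{,}480$; (d) $M(21,14)\geq |M_{24}|/(23\cdot 22)=483{,}840$.
   Context: $hd(\pi,\sigma)$ is the number of points at which permutations $\pi,\sigma$ differ; $hd(A)$ is the minimum over distinct pairs in $A$. For a permutation $\pi$ of $\Theta$, $\pi^{\triangle}$ is defined by $\pi^{\triangle}(\pi^{-1}(F))=\pi(F)$, $\pi^{\triangle}(F)=F$, $\pi^{\triangle}(x)=\pi(x)$ otherwise; $\pi^{\triangle}_{-}$ is its restriction to $\Theta\setminus\{F\}$; for a set $S$ of permutations, $S^{\triangle}_{-}=\{\pi^{\triangle}_{-}:\pi\in S\}$. $M(n,d)$ is the maximum size of a set of permutations of an $n$-element set with pairwise Hamming distance at least $d$. *)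

From mathcomp Require Import all_boot all_fingroup.
Set Implicit Arguments. Unset Strict Implicit. Unset Printing Implicit Defensive.



Definition hd (T : finType) (p q : {perm T}) : nat := #|[pred x | p x != q x]|.

Definition hdset (T : finType) (A : {set {perm T}}) : nat :=
  \big[minn/#|T|]_(pq in setX A A | pq.1 != pq.2) hd pq.1 pq.2.

Definition Mnd (n d : nat) : nat :=
  \max_(S : {set {perm 'I_n}} |
          [forall p in S, forall q in S, (p != q) ==> (d <= hd p q)]) #|S|.

(* Theta = PG(1,23) = GF(23) u {oo}, with point t in GF(23) encoded as t
   (0..22) and oo encoded as 23.  Conway's generators:
     alpha : t -> t+1,  beta : t -> 2t,  gamma : t -> -1/t,
     delta : t -> t^3/9 (t a nonzero square), 9 t^3 (t a non-square),
             fixing 0 and oo. *)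
Definition tab (s : seq nat) : {ffun 'I_24 -> 'I_24} :=
  [ffun i : 'I_24 => inord (nth 0 s i)].

Definition alpha_s := [:: 1; 2; 3; 4; 5; 6; 7; 8; 9; 10; 11; 12; 13; 14; 15; 16; 17; 18; 19; 20; 21; 22; 0; 23].
Definition beta_s  := [:: 0; 2; 4; 6; 8; 10; 12; 14; 16; 18; 20; 22; 1; 3; 5; 7; 9; 11; 13; 15; 17; 19; 21; 23].
Definition gamma_s := [:: 23; 22; 11; 15; 17; 9; 19; 13; 20; 5; 16; 2; 21; 7; 18; 3; 10; 4; 14; 6; 8; 12; 1; 0].
Definition delta_s := [:: 0; 18; 6; 3; 2; 21; 1; 5; 16; 12; 7; 19; 8; 9; 17; 15; 13; 11; 4; 22; 10; 20; 14; 23].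

Lemma tab_inj (s : seq nat) :
  size s = 24 -> uniq s -> all (fun k => k < 24) s -> injective (tab s).
Proof.
move=> Hs Hu Ha i j; rewrite !ffunE => /(congr1 val).
have Hl (k : 'I_24) : nth 0 s k < 24.
  by apply: (allP Ha); apply: mem_nth; rewrite Hs.
rewrite /= !inordK ?Hl // => E; apply: val_inj.
by apply/eqP; rewrite -(nth_uniq 0 _ _ Hu) ?Hs ?ltn_ord // E.
Qed.

Lemma alpha_inj : injective (tab alpha_s). Proof. exact: tab_inj. Qed.
Lemma beta_inj  : injective (tab beta_s).  Proof. exact: tab_inj. Qed.
Lemma gamma_inj : injective (tab gamma_s). Proof. exact: tab_inj. Qed.
Lemma delta_inj : injective (tab delta_s). Proof. exact: tab_inj. Qed.

Definition alpha : {perm 'I_24} := perm alpha_inj.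
Definition beta  : {perm 'I_24} := perm beta_inj.
Definition gamma : {perm 'I_24} := perm gamma_inj.
Definition delta : {perm 'I_24} := perm delta_inj.

Definition M24 : {set {perm 'I_24}} := (<<[set alpha; beta; gamma; delta]>>)%g.

Definition tri (T : finType) (F : T) (p : {perm T}) (x : T) : T :=
  if x == F then F else if x == (p^-1)%g F then p F else p x.

Lemma tri_neq (T : finType) (F : T) (p : {perm T}) (x : T) :
  x != F -> tri F p x != F.
Proof.
move=> xF; rewrite /tri (negbTE xF).
case: ifP => [/eqP E | /negbT H].
  apply: contra xF => /eqP E2; rewrite E; apply/eqP.
  by rewrite -{1}E2 permK.
by apply: contra H => /eqP <-; rewrite permK.
Qed.

Lemma tri_inj (T : finType) (F : T) (p : {perm T}) : injective (tri F p).
Proof.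
have E : tri F p =1 (p * tperm F (p F))%g.
  move=> x; rewrite permM /tri.
  case: (x =P F) => [-> | /eqP xF]; first by rewrite tpermR.
  case: (x =P (p^-1)%g F) => [-> | /eqP xp]; first by rewrite permKV tpermL.
  rewrite tpermD //.
    by apply: contra xp => /eqP ->; rewrite permK.
  by apply: contra xF => /eqP /perm_inj ->.
by move=> x y; rewrite !E => /perm_inj.
Qed.

Definition ThetaF (T : finType) (F : T) : finType := {x : T | x != F}.

Definition tri_minus_fun (T : finType) (F : T) (p : {perm T})
    (x : ThetaF F) : ThetaF F :=
  exist _ (tri F p (val x)) (@tri_neq T F p (val x) (valP x)).

Lemma tri_minus_inj (T : finType) (F : T) (p : {perm T}) :
  injective (@tri_minus_fun T F p).
Proof. by move=> x y [] /tri_inj E; apply: val_inj. Qed.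

Definition tri_minus (T : finType) (F : T) (p : {perm T}) : {perm ThetaF F} :=
  perm (@tri_minus_inj T F p).

Definition tri_minus_set (T : finType) (F : T) (S : {set {perm T}}) :
  {set {perm ThetaF F}} := [set tri_minus F p | p in S].

From mathcomp Require Import all_boot all_fingroup zify.
Set Implicit Arguments. Unset Strict Implicit. Unset Printing Implicit Defensive.

(* The distance between [tri_minus F p] and [tri_minus F q] only depends on
   [s = q^-1 * p] and [v = q F]: it is the Hamming distance between
   [s * tperm F (s v)] and [tperm F v], hence at least the number of points
   moved by [s], minus 4.  So a nonidentity element of M24 with at most four
   fixed points gives distance at least 16.  Every other element is conjugate
   in M24 into the pointwise stabiliser of [0, ..., 4], a group of order 48
   that is checked exhaustively.  The order of M24 and this conjugation both
   come from a Schreier-Sims stabiliser chain, whose transversal elements are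
   words in Conway's generators checked by computation.  Parts (b)-(d) follow
   by relabelling points and by shortening, M(n, d) >= M(n + 1, d) / (n + 1). *)

Section HammingDistance.
Variable T : finType.
Local Open Scope group_scope.
Implicit Types (p q r s h : {perm T}) (F v : T).

Lemma hdxx p : hd p p = 0.
Proof. by apply: eq_card0 => x; rewrite inE eqxx. Qed.

Lemma hdC p q : hd p q = hd q p.
Proof. by apply: eq_card => x; rewrite !inE eq_sym. Qed.

Lemma hd_triangle p q r : hd p r <= hd p q + hd q r.
Proof.
rewrite /hd -cardUI; apply: leq_trans (leq_addr _ _); apply: subset_leq_card.
apply/subsetP => x; rewrite !inE; apply: contraR; rewrite negb_or !negbK.
by case/andP => /eqP -> /eqP ->.
Qed.

Lemma hd_mull h p q : hd (h * p) (h * q) = hd p q.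
Proof.
rewrite /hd -(card_image (@perm_inj _ h)); apply: eq_card => y; rewrite inE.
apply/imageP/idP => [[x Hx ->] | Hy]; first by move: Hx; rewrite !inE /= !permM.
by exists (h^-1 y); rewrite ?inE /= ?permM ?permKV.
Qed.

Lemma hd_mulr h p q : hd (p * h) (q * h) = hd p q.
Proof. by apply: eq_card => x; rewrite !inE !permM (inj_eq perm_inj). Qed.

Lemma hd_conjg h p q : hd (p ^ h) (q ^ h) = hd p q.
Proof. by rewrite !conjgE hd_mull hd_mulr. Qed.

Lemma hd_tperm1 F v : hd (tperm F v) 1 <= 2.
Proof.
apply: leq_trans (card_size [:: F; v]); apply: subset_leq_card.
by apply/subsetP => x; rewrite !inE perm1; case: tpermP => [->|->|]; rewrite ?eqxx ?orbT.
Qed.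

Lemma triE F p x : tri F p x = (p * tperm F (p F)) x.
Proof.
rewrite permM /tri; case: (x =P F) => [-> | /eqP xF]; first by rewrite tpermR.
case: (x =P (p^-1)%g F) => [-> | /eqP xp]; first by rewrite permKV tpermL.
rewrite tpermD //; first by apply: contra xp => /eqP ->; rewrite permK.
by apply: contra xF => /eqP /perm_inj ->.
Qed.

Lemma hd_tri_minus F p q :
  hd (tri_minus F p) (tri_minus F q) = hd (p * tperm F (p F)) (q * tperm F (q F)).
Proof.
rewrite /hd -(card_imset _ val_inj); apply: eq_card => y; rewrite !inE -!triE.
apply/imsetP/idP => [[x] | Hy].
  by rewrite inE !permE /= -val_eqE => Hx ->.
have yF : y != F by apply: contra Hy => /eqP ->; rewrite /tri eqxx.
by exists (exist _ y yF); rewrite // inE !permE -val_eqE.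
Qed.

Definition tri_dist s F v := hd (s * tperm F (s v)) (tperm F v).

Lemma hd_tri_minus_dist F p q :
  hd (tri_minus F p) (tri_minus F q) = tri_dist (q^-1 * p) F (q F).
Proof.
rewrite hd_tri_minus -(hd_mull (q^-1)) !mulgA mulVg mul1g.
by rewrite /tri_dist permM permK.
Qed.

Lemma tri_dist_conjg h s F v : tri_dist (s ^ h) (h F) (h v) = tri_dist s F v.
Proof.
by rewrite /tri_dist conjgE !permM permK -conjgE -!tpermJ -conjMg hd_conjg.
Qed.

Lemma hd1_le_tri_dist s F v : hd s 1 <= tri_dist s F v + 4.
Proof.
have close : hd s (s * tperm F (s v)) <= 2.
  by rewrite -{1}[s]mulg1 hd_mull hdC hd_tperm1.
have far : hd (s * tperm F (s v)) 1 <= tri_dist s F v + 2.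
  by apply: leq_trans (hd_triangle _ (tperm F v) _) _; rewrite leq_add2l hd_tperm1.
have := hd_triangle s (s * tperm F (s v)) 1; lia.
Qed.

End HammingDistance.

Definition code (T : finType) d (A : {set {perm T}}) :=
  forall p q, p \in A -> q \in A -> p != q -> d <= hd p q.

Lemma codeP (T : finType) d (A : {set {perm T}}) :
  reflect (code d A) [forall p in A, forall q in A, (p != q) ==> (d <= hd p q)].
Proof.
apply: (iffP forall_inP) => [HA p q Hp Hq | HA p Hp].
  by move/forall_inP/(_ q Hq)/implyP: (HA p Hp); apply.
by apply/forall_inP => q Hq; apply/implyP; apply: HA.
Qed.

Lemma hdset_ge_code (T : finType) d (A : {set {perm T}}) :
  d <= #|T| -> code d A -> d <= hdset A.
Proof.
move=> dT HA; rewrite /hdset; elim/big_ind: _ => //.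
  by move=> x y Hx Hy; rewrite leq_min Hx.
by case=> p q /andP [/setXP [Hp Hq] Hne]; apply: HA.
Qed.

(* Relabelling the points along a bijection [T -> 'I_n] preserves distances. *)
Lemma Mnd_ge_code (T : finType) n d (A : {set {perm T}}) :
  #|T| = n -> code d A -> #|A| <= Mnd n d.
Proof.
move=> Tn HA.
pose f (x : T) : 'I_n := cast_ord Tn (enum_rank x).
pose g (u : 'I_n) : T := enum_val (cast_ord (esym Tn) u).
have fK : cancel f g by move=> x; rewrite /f /g cast_ordK enum_rankK.
have gK : cancel g f by move=> u; rewrite /f /g enum_valK cast_ordKV.
have relabel_inj (p : {perm T}) : injective (fun u => f (p (g u))).
  by move=> u w /(can_inj fK) /perm_inj /(can_inj gK).
pose relabel p := perm (relabel_inj p).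
have hd_relabel p q : hd (relabel p) (relabel q) = hd p q.
  rewrite /hd -(card_image (can_inj fK)); apply: eq_card => u; rewrite inE.
  apply/idP/imageP => [Hu | [x Hx ->]].
    by exists (g u); rewrite ?gK //; move: Hu; rewrite inE /= !permE (inj_eq (can_inj fK)).
  by move: Hx; rewrite !inE /= !permE fK (inj_eq (can_inj fK)).
have relabelK : injective relabel.
  move=> p q /permP E; apply/permP => x.
  by have := E (f x); rewrite !permE fK => /(can_inj fK).
rewrite -(card_imset _ relabelK); apply: leq_bigmax_cond; apply/codeP.
move=> _ _ /imsetP [p Hp ->] /imsetP [q Hq ->] Hne; rewrite hd_relabel.
by apply: HA => //; apply: contra Hne => /eqP ->.
Qed.

Lemma hd_tri_minus_agree (T : finType) (a : T) (p q : {perm T}) :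
  p a = q a -> hd (tri_minus a p) (tri_minus a q) = hd p q.
Proof. by move=> E; rewrite hd_tri_minus E hd_mulr. Qed.

Lemma card_sig_neq (T : finType) (a : T) : #|{: {x : T | x != a}}| = #|T|.-1.
Proof. by rewrite card_sig -(cardC1 a); apply: eq_card => x; rewrite !inE. Qed.

(* Shortening: the codewords sending [a] to the most popular image [b] form a
   code of the same distance on [T \ {a}]. *)
Lemma short_code (T : finType) (a : T) d (A : {set {perm T}}) : 0 < d -> code d A ->
  exists2 B : {set {perm {x : T | x != a}}}, code d B & #|A| %/ #|T| <= #|B|.
Proof.
move=> d_gt0 HA; pose A_ b := [set p in A | p a == b].
have sum_A : #|A| = \sum_b #|A_ b|.
  rewrite -sum1_card (partition_big (fun p : {perm T} => p a) predT) //=.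
  by apply: eq_bigr => b _; rewrite -sum1_card; apply: eq_bigl => p; rewrite inE.
have T_gt0 : 0 < #|T| by apply/card_gt0P; exists a.
have [b Hb] := eq_bigmax (fun b => #|A_ b|) T_gt0.
have large : #|A| <= #|T| * #|A_ b|.
  by rewrite sum_A -Hb -sum_nat_const; apply: leq_sum => c _; apply: leq_bigmax.
have hd_A_b p q : p \in A_ b -> q \in A_ b -> hd (tri_minus a p) (tri_minus a q) = hd p q.
  by rewrite !inE => /andP [_ /eqP pa] /andP [_ /eqP qa]; apply: hd_tri_minus_agree; rewrite pa qa.
exists (tri_minus a @: A_ b).
  move=> _ _ /imsetP [p Hp ->] /imsetP [q Hq ->] Hne; rewrite hd_A_b //.
  move: Hp Hq; rewrite !inE => /andP [Hp _] /andP [Hq _].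
  by apply: HA => //; apply: contra Hne => /eqP ->.
rewrite card_in_imset; first by rewrite -(mulKn #|A_ b| T_gt0) leq_div2r.
move=> p q Hp Hq E; apply/eqP; apply: contraT => Hne.
have := hd_A_b p q Hp Hq; rewrite E hdxx => hd0.
move: Hp Hq; rewrite !inE => /andP [Hp _] /andP [Hq _].
by have := HA p q Hp Hq Hne; rewrite -hd0 leqNgt d_gt0.
Qed.

Lemma Mnd_shorten n d : 0 < d -> Mnd n.+1 d %/ n.+1 <= Mnd n d.
Proof.
move=> d_gt0.
pose P (S : {set {perm 'I_n.+1}}) := [forall p in S, forall q in S, (p != q) ==> (d <= hd p q)].
have [|S /codeP HS max_S] := @eq_bigmax_cond _ P (fun S => #|S|).
  by apply/card_gt0P; exists set0; apply/codeP => p q; rewrite inE.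
have -> : Mnd n.+1 d = #|S| by exact: max_S.
have [B HB large] := short_code ord0 d_gt0 HS.
rewrite card_ord in large; apply: leq_trans large _.
by apply: Mnd_ge_code HB; rewrite card_sig_neq card_ord.
Qed.

(* One level of a stabiliser chain: if [t] is a transversal of the orbit [O]
   of [b] in [<<S>>] such that the Schreier generators [t y * s * (t (s y))^-1]
   lie in [<<S'>>], a group fixing [b], then [<<S'>>] is the stabiliser of [b]
   in [<<S>>]. *)
Section SchreierLevel.
Variables (T : finType) (S S' : {set {perm T}}) (b : T) (O : seq T) (t : T -> {perm T}).
Local Open Scope group_scope.
Hypotheses (S'_fix : forall s, s \in S' -> s b = b)
  (t_gen : forall y, y \in O -> t y \in <<S>>)
  (t_base : forall y, y \in O -> t y b = y)
  (b_in_O : b \in O) (t_b : t b = 1)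
  (schreier : forall y s, y \in O -> s \in S ->
     s y \in O /\ t y * s * (t (s y))^-1 \in <<S'>>).

Lemma gen_fix_base h : h \in <<S'>> -> h b = b.
Proof.
have sub : <<S'>> \subset 'C[b | 'P].
  by rewrite gen_subG; apply/subsetP => s /S'_fix Hs; apply/astab1P.
by move=> /(subsetP sub) /astab1P.
Qed.

Lemma schreier_decomp g : g \in <<S>> ->
  exists2 h, h \in <<S'>> & exists2 y, y \in O & g = h * t y.
Proof.
case/gen_prodgP=> n [c Hc ->]; elim: n c Hc => [|n IH] c Hc.
  by rewrite big_ord0; exists 1; rewrite ?group1 //; exists b; rewrite ?t_b ?mulg1.
rewrite big_ord_recr /=.
have [h Hh [y Hy ->]] := IH (fun i => c (widen_ord (leqnSn n) i)) (fun i => Hc _).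
have [Hz Hs] := schreier Hy (Hc ord_max).
exists (h * (t y * c ord_max * (t (c ord_max y))^-1)); first by rewrite groupM.
by exists (c ord_max y) => //; rewrite !mulgA mulgKV.
Qed.

Lemma schreier_stab g : g \in <<S>> -> g b = b -> g \in <<S'>>.
Proof.
move=> /schreier_decomp [h Hh [y Hy ->]]; rewrite permM gen_fix_base // t_base // => yb.
by move: t_b; rewrite -yb => ->; rewrite mulg1.
Qed.

Lemma card_schreier : uniq O -> S' \subset S -> #|<<S>>| = (size O * #|<<S'>>|)%N.
Proof.
move=> uO sS; rewrite -(card_orbit_stab 'P [group of <<S>>] b); congr (_ * _)%N.
  rewrite -(card_uniqP uO); apply: eq_card => y; apply/orbitP/idP.
    case=> g /schreier_decomp [h Hh [z Hz ->]] /= <-.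
    by rewrite /aperm permM gen_fix_base // t_base.
  by move=> Hy; exists (t y); rewrite ?t_gen //= /aperm t_base.
apply: eq_card => g; rewrite inE /=; apply/andP/idP => [[Hg /astab1P] | Hg].
  exact: schreier_stab.
by split; [apply: (subsetP (genS sS)) | apply/astab1P; apply: gen_fix_base].
Qed.

End SchreierLevel.

Definition slp := seq (seq (nat * bool)).

Section StraightLinePrograms.
Variables (T : Type) (one : T) (mul : T -> T -> T) (inv : T -> T).

Definition slp_letter (acc : seq T) (l : nat * bool) :=
  let g := nth one acc l.1 in if l.2 then inv g else g.

Definition slp_word (acc : seq T) (w : seq (nat * bool)) :=
  foldr (fun l r => mul (slp_letter acc l) r) one w.

Fixpoint slp_eval (acc : seq T) (p : slp) : seq T :=
  if p is w :: p' then slp_eval (rcons acc (slp_word acc w)) p' else acc.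

Lemma nth_slp_eval_prefix p acc i :
  i < size acc -> nth one (slp_eval acc p) i = nth one acc i.
Proof.
elim: p acc => [|w p IH] acc //= Hi.
by rewrite IH ?size_rcons 1?ltnW // nth_rcons Hi.
Qed.

End StraightLinePrograms.

Lemma slp_eval_rel (T U : Type) (R : T -> U -> Prop) one1 mul1 inv1 one2 mul2 inv2 :
  R one1 one2 -> (forall a b c d, R a b -> R c d -> R (mul1 a c) (mul2 b d)) ->
  (forall a b, R a b -> R (inv1 a) (inv2 b)) ->
  forall p acc1 acc2, size acc1 = size acc2 ->
  (forall i, R (nth one1 acc1 i) (nth one2 acc2 i)) ->
  forall i, R (nth one1 (slp_eval one1 mul1 inv1 acc1 p) i)
              (nth one2 (slp_eval one2 mul2 inv2 acc2 p) i).
Proof.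
move=> R1 RM RI; elim=> [|w p IH] acc1 acc2 Es Ri //=.
apply: IH; first by rewrite !size_rcons Es.
have Rw : R (slp_word one1 mul1 inv1 acc1 w) (slp_word one2 mul2 inv2 acc2 w).
  elim: w => [|[j b] w IHw] //=; apply: RM => //.
  by rewrite /slp_letter /=; case: b; [apply: RI|]; apply: Ri.
by move=> i; rewrite !nth_rcons Es; case: ltnP => // _; case: eqP.
Qed.

Definition lid : seq nat := iota 0 24.
(* [lcomp s t] is [s] followed by [t], like the product [(g * h)%g]. *)
Definition lcomp (s t : seq nat) := [seq nth 0 t (nth 0 s x) | x <- iota 0 24].
Definition linv (s : seq nat) := [seq index x s | x <- iota 0 24].
Definition lperm (s : seq nat) (g : {perm 'I_24}) := s = [seq val (g i) | i <- enum 'I_24].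

Lemma lpermE s g : lperm s g -> forall i : 'I_24, nth 0 s i = g i.
Proof.
move=> -> i; rewrite (nth_map ord0) ?size_enum_ord ?ltn_ord //.
by rewrite nth_ord_enum.
Qed.

Lemma lpermP s (g : {perm 'I_24}) :
  size s = 24 -> (forall i : 'I_24, nth 0 s i = g i) -> lperm s g.
Proof.
move=> Hs Hn; apply: (@eq_from_nth _ 0); first by rewrite size_map size_enum_ord.
move=> i; rewrite Hs => Hi.
by rewrite (nth_map ord0) ?size_enum_ord // -[i]/(val (Ordinal Hi)) nth_ord_enum Hn.
Qed.

Lemma lperm_inj s g h : lperm s g -> lperm s h -> g = h.
Proof.
move=> Hg Hh; apply/permP => i; apply: val_inj.
by rewrite /= -(lpermE Hg) -(lpermE Hh).
Qed.

Lemma lperm1 : lperm lid 1%g.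
Proof. by apply: lpermP => // i; rewrite perm1 nth_iota. Qed.

Lemma lpermM s t g h : lperm s g -> lperm t h -> lperm (lcomp s t) (g * h)%g.
Proof.
move=> Hs Ht; apply: lpermP; first by rewrite size_map size_iota.
move=> i; rewrite (nth_map 0) ?size_iota // nth_iota // add0n.
by rewrite (lpermE Hs) (lpermE Ht (g i)) permM.
Qed.

Lemma lpermV s g : lperm s g -> lperm (linv s) (g^-1)%g.
Proof.
move=> Hs; apply: lpermP; first by rewrite size_map size_iota.
move=> i; rewrite (nth_map 0) ?size_iota // nth_iota // add0n.
have -> : (i : nat) = (val \o g) ((g^-1)%g i) by rewrite /= permKV.
rewrite Hs index_map ?index_enum_ord //.
exact: inj_comp val_inj (@perm_inj _ g).
Qed.

Lemma lperm_tab s (H : injective (tab s)) :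
  size s = 24 -> all (fun k => k < 24) s -> lperm s (perm H).
Proof.
move=> Hs Ha; apply: lpermP => // i; rewrite permE ffunE inordK //.
by apply: (allP Ha); apply: mem_nth; rewrite Hs.
Qed.

Definition M24_gens := [:: alpha; beta; gamma; delta].
Definition M24_gens_lists := [:: alpha_s; beta_s; gamma_s; delta_s].

Definition M24_slp : slp := [::
  [::(2,false);(0,false);(2,true)]; [::(1,false);(3,false)]; [::(5,false);(1,false)];
  [::(0,false);(4,false);(2,true);(6,true)]; [::(1,false);(3,false)]; [::(8,false);(7,false)];
  [::(0,false);(7,false);(0,true);(9,true)]; [::(1,false);(3,false)]; [::(7,false);(7,false)];
  [::(0,false);(10,false);(0,true);(11,true);(12,true)]; [::(0,false);(13,false);(0,true)];
  [::(3,false);(14,false)]; [::(7,false);(10,false)]; [::(16,false);(14,false)];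
  [::(14,false);(14,false)];
  [::(0,false);(7,false);(0,true);(15,true);(17,true);(18,true);(13,true)];
  [::(7,false);(7,false)]; [::(20,false);(10,false)]; [::(21,false);(19,false)];
  [::(14,false);(13,false)]; [::(0,false);(14,false);(0,true);(22,true);(23,true)];
  [::(7,false);(24,false)]; [::(14,false);(19,false)]; [::(13,false);(19,false)];
  [::(0,false);(14,false);(0,true);(25,true);(26,true);(27,true)]; [::(28,false);(28,false)];
  [::(0,false);(28,false);(0,true);(13,true);(29,true)]; [::(0,false);(0,false)];
  [::(0,false);(2,false)]; [::(0,false);(3,false)]; [::(2,false);(7,false)];
  [::(2,false);(10,false)]; [::(2,false);(13,false)]; [::(2,false);(14,false)];
  [::(2,false);(19,false)]; [::(2,false);(24,false)]; [::(2,false);(28,false)];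
  [::(31,false);(0,false)]; [::(31,false);(1,false)]; [::(31,false);(2,false)];
  [::(31,false);(3,false)]; [::(31,false);(10,false)]; [::(32,false);(13,false)];
  [::(32,false);(19,false)]; [::(32,false);(30,false)]; [::(33,false);(13,false)];
  [::(34,false);(0,false)]; [::(35,false);(3,false)]; [::(1,false);(1,false)];
  [::(1,false);(3,false)]; [::(1,false);(4,false)]; [::(1,false);(10,false)];
  [::(3,false);(1,false)]; [::(3,false);(4,false)]; [::(3,false);(7,false)];
  [::(3,false);(10,false)]; [::(3,false);(13,false)]; [::(3,false);(14,false)];
  [::(3,false);(24,false)]; [::(4,false);(4,false)]; [::(4,false);(7,false)];
  [::(4,false);(10,false)]; [::(4,false);(28,false)]; [::(52,false);(7,false)];
  [::(53,false);(1,false)]; [::(53,false);(10,false)]; [::(57,false);(14,false)];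
  [::(7,false);(7,false)]; [::(7,false);(10,false)]; [::(7,false);(13,false)];
  [::(7,false);(14,false)]; [::(7,false);(19,false)]; [::(7,false);(24,false)];
  [::(7,false);(28,false)]; [::(7,false);(30,false)]; [::(10,false);(10,false)];
  [::(10,false);(14,false)]; [::(10,false);(28,false)]; [::(71,false);(10,false)];
  [::(71,false);(19,false)]; [::(71,false);(24,false)]; [::(72,false);(14,false)];
  [::(73,false);(7,false)]; [::(73,false);(24,false)]; [::(74,false);(30,false)];
  [::(75,false);(13,false)]; [::(14,false);(13,false)]; [::(14,false);(14,false)];
  [::(14,false);(19,false)]; [::(14,false);(24,false)]; [::(14,false);(30,false)];
  [::(90,false);(14,false)]; [::(90,false);(19,false)]; [::(90,false);(24,false)];
  [::(90,false);(28,false)]; [::(91,false);(24,false)]; [::(92,false);(13,false)];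
  [::(92,false);(14,false)]; [::(92,false);(30,false)]; [::(93,false);(13,false)];
  [::(94,false);(13,false)]; [::(94,false);(14,false)]; [::(94,false);(24,false)];
  [::(95,false);(14,false)]; [::(97,false);(24,false)]; [::(13,false);(13,false)];
  [::(13,false);(19,false)]; [::(13,false);(24,false)]; [::(13,false);(28,false)];
  [::(13,false);(30,false)]; [::(24,false);(13,false)]; [::(24,false);(28,false)];
  [::(109,false);(19,false)]; [::(109,false);(28,false)]; [::(110,false);(19,false)];
  [::(110,false);(24,false)]; [::(110,false);(30,false)]; [::(111,false);(24,false)];
  [::(111,false);(28,false)]; [::(112,false);(13,false)]; [::(113,false);(13,false)];
  [::(117,false);(13,false)]; [::(19,false);(19,false)]; [::(19,false);(28,false)];
  [::(28,false);(19,false)]; [::(28,false);(28,false)]; [::(28,false);(30,false)];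
  [::(126,false);(28,false)]; [::(126,false);(30,false)]; [::(127,false);(28,false)];
  [::(127,false);(30,false)]; [::(128,false);(19,false)]; [::(129,false);(19,false)];
  [::(130,false);(19,false)]; [::(136,false);(30,false)]; [::(30,false);(30,false)]; [::]].

(* A Schreier-Sims stabiliser chain for the base [0, ..., 6].  Level [l] is
   generated by the program entries [chain_gens l] below, [chain_orbits l] is
   the orbit of [l] under it, and the [k]-th entry of [chain_transversals l]
   is the program index of an element of that level sending
   [l] to the [k]-th point of that orbit; index 140 is the empty word. *)
Definition chain_orbits : seq (seq nat) :=
  [::[::0;1;23;2;22;18;16;9;14;13;19;21;8;3;4;11;6;7;15;5;20;10;17;12];
  [::1;2;18;23;4;6;21;7;13;3;19;14;10;5;11;22;16;9;8;15;12;20;17];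
  [::2;6;7;5;20;8;19;14;16;11;21;22;10;12;17;15;18;3;13;4;9;23];
  [::3;17;5;9;16;20;23;7;15;18;19;8;22;4;6;12;14;13;21;10;11];
  [::4;18;23;10;21;11;5;19;14;8;12;7;13;9;16;15;22;17;6;20];
  [::5;15;19;22;13;11;18;9;6;20;14;8;23;21;17;16];
  [::6;21;16]].
Definition chain_transversals : seq (seq nat) :=
  [::[::140;0;2;31;32;33;34;35;36;37;38;39;40;41;42;43;44;45;46;47;48;49;50;51];
  [::140;1;3;4;52;53;54;55;56;57;58;59;60;61;62;63;64;65;66;67;68;69;70];
  [::140;7;10;71;72;73;74;75;76;77;78;79;80;81;82;83;84;85;86;87;88;89];
  [::140;14;90;91;92;93;94;95;96;97;98;99;100;101;102;103;104;105;106;107;108];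
  [::140;13;24;109;110;111;112;113;114;115;116;117;118;119;120;121;122;123;124;125];
  [::140;19;28;126;127;128;129;130;131;132;133;134;135;136;137;138];
  [::140;30;139]].
Definition chain_gens l :=
  (if l is 0 then [:: 0; 1; 2; 3] else [::]) ++ flatten (drop l chain_transversals).
Definition orbit_at l := nth [::] chain_orbits l.
Definition transversal_at l := nth [::] chain_transversals l.

Definition lswap (F v z : nat) := if z == F then v else if z == v then F else z.
Definition ltri_dist k F v :=
  count (fun z => lswap F (nth 0 k v) (nth 0 k z) != lswap F v z) (iota 0 24).
Definition ltri_dist_ge14 k :=
  all (fun F => all (fun v => 14 <= ltri_dist k F v) (iota 0 24)) (iota 0 24).

(* The program values [ev] are a section variable so that [vm_compute] below
   evaluates the program only once. *)
Section Certificate.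
Variable ev : seq (seq nat).

Definition lel i := nth lid ev i.
Definition ltrans l y := lel (nth 0 (transversal_at l) (index y (orbit_at l))).

Fixpoint sift_fuel (fuel l : nat) (x : seq nat) : bool :=
  if fuel is f.+1 then
    let z := nth 0 x l in
    (z \in orbit_at l) && sift_fuel f l.+1 (lcomp x (linv (ltrans l z)))
  else x == lid.
Definition sift l x := sift_fuel (7 - l) l x.

Definition check_next_gens l :=
  all (fun s => (nth 0 (lel s) l == l) && (s \in chain_gens l)) (chain_gens l.+1).
Definition check_orbit l :=
  [&& uniq (orbit_at l), all (fun y => y < 24) (orbit_at l), l \in orbit_at l
    & (l < 5) ==> all (fun y => (l <= y) ==> (y \in orbit_at l)) (iota 0 24)].
Definition check_transversal l :=
  [&& ltrans l l == lid,
      all (fun y => nth 0 (ltrans l y) l == y) (orbit_at l)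
    & all (fun y => nth 0 (transversal_at l) (index y (orbit_at l)) \in chain_gens l)
          (orbit_at l)].
(* Schreier's lemma: the Schreier generators of level [l] sift through level [l.+1]. *)
Definition check_schreier l :=
  all (fun y => all (fun s => let z := nth 0 (lel s) y in
      (z \in orbit_at l) &&
      sift l.+1 (lcomp (lcomp (ltrans l y) (lel s)) (linv (ltrans l z))))
    (chain_gens l)) (orbit_at l).
Definition check_level l :=
  [&& check_next_gens l, check_orbit l, check_transversal l & check_schreier l].
(* Level 5 is the product of the transversals of the last two levels. *)
Definition check_level5 :=
  all (fun z => all (fun y => let k := lcomp (ltrans 6 z) (ltrans 5 y) in
    (k == lid) || ltri_dist_ge14 k) (orbit_at 5)) (orbit_at 6).
Definition check_all := all check_level (iota 0 7) && check_level5.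

End Certificate.

Definition M24_slp_lists := slp_eval lid lcomp linv M24_gens_lists M24_slp.

Lemma check_all_M24 : check_all M24_slp_lists.
Proof. by vm_compute. Qed.

Definition chain_els :=
  slp_eval 1%g (fun x y => x * y)%g (fun x => x^-1)%g M24_gens M24_slp.
Definition chain_el i : {perm 'I_24} := nth 1%g chain_els i.

Lemma lperm_chain_el i : lperm (lel M24_slp_lists i) (chain_el i).
Proof.
apply: (@slp_eval_rel _ _ (fun a b => lperm b a)) => //.
- exact: lperm1.
- by move=> a b c d; apply: lpermM.
- by move=> a b; apply: lpermV.
by case=> [|[|[|[|j]]]] /=; try apply: lperm_tab; rewrite // !nth_nil; exact: lperm1.
Qed.

Lemma chain_el_gens j : j < 4 -> chain_el j = nth 1%g M24_gens j.
Proof. by move=> Hj; rewrite /chain_el nth_slp_eval_prefix. Qed.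

Lemma chain_el_M24 i : chain_el i \in M24.
Proof.
apply: (@slp_eval_rel _ {perm 'I_24} (fun a _ => a \in M24) _ _ _
  1%g (fun x y => x * y)%g (fun x => x^-1)%g _ _ _ M24_slp M24_gens M24_gens erefl).
- exact: group1.
- by move=> a _ c _ Ha Hc; rewrite groupM.
- by move=> a _ Ha; rewrite groupV.
case=> [|[|[|[|j]]]] /=; last by rewrite nth_nil group1.
all: by rewrite /M24 mem_gen // !inE eqxx ?orbT.
Qed.

Definition chain_genset l := [set x | x \in [seq chain_el i | i <- chain_gens l]].
Definition chain_group l := <<chain_genset l>>%g.
Definition trans_el l z := chain_el (nth 0 (transversal_at l) (index z (orbit_at l))).
Definition orbit_ord l : seq 'I_24 := [seq inord y | y <- orbit_at l].

Lemma check_level_M24 l : l < 7 -> check_level M24_slp_lists l.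
Proof.
move=> Hl; move: check_all_M24; rewrite /check_all => /andP [/allP levels _].
by apply: levels; rewrite mem_iota.
Qed.

Lemma lperm_trans_el l z : lperm (ltrans M24_slp_lists l z) (trans_el l z).
Proof. exact: lperm_chain_el. Qed.

Lemma mem_chain_group l i : i \in chain_gens l -> chain_el i \in chain_group l.
Proof. by move=> Hi; apply: mem_gen; rewrite inE map_f. Qed.

Lemma chain_gensetP l s : s \in chain_genset l -> exists2 i, i \in chain_gens l & s = chain_el i.
Proof. by rewrite inE => /mapP. Qed.

Lemma chain_gens_next l i : l < 7 -> i \in chain_gens l.+1 ->
  nth 0 (lel M24_slp_lists i) l = l /\ i \in chain_gens l.
Proof. by move=> /check_level_M24 /and4P [/allP next _ _ _] /next /andP [/eqP]. Qed.

Lemma chain_group_sub l : l < 7 -> chain_group l.+1 \subset chain_group l.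
Proof.
move=> Hl; apply: genS; apply/subsetP => _ /chain_gensetP [i Hi ->].
by rewrite inE map_f //; case: (chain_gens_next Hl Hi).
Qed.

Lemma trans_el_in l z : l < 7 -> z \in orbit_at l -> trans_el l z \in chain_group l.
Proof.
move=> /check_level_M24 /and4P [_ _ /and3P [_ _ /allP trans_gen] _] Hz.
exact/mem_chain_group/trans_gen.
Qed.

Lemma sift_chain_group f l x g : l + f = 7 -> lperm x g ->
  sift_fuel M24_slp_lists f l x -> g \in chain_group l.
Proof.
elim: f l x g => [|f IH] l x g /= Hlf Hx.
  by move/eqP=> E; rewrite E in Hx; rewrite (lperm_inj Hx lperm1) group1.
have Hl : l < 7 by rewrite -Hlf addnS ltnS leq_addr.
case/andP=> Hz /(IH l.+1 _ _ _ (lpermM Hx (lpermV (lperm_trans_el _ _)))).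
rewrite addSnnS => /(_ Hlf) Hg.
rewrite -(mulgKV (trans_el l (nth 0 x l)) g); apply: groupM; last exact: trans_el_in.
exact: (subsetP (chain_group_sub Hl)).
Qed.

Lemma mem_orbit_ord l (y : 'I_24) : l < 7 -> (y \in orbit_ord l) = ((y : nat) \in orbit_at l).
Proof.
move=> /check_level_M24 /and4P [_ /and4P [_ /allP lt24 _ _] _ _].
apply/mapP/idP => [[z Hz ->] | Hy]; first by rewrite inordK ?lt24.
by exists (val y); rewrite ?inord_val.
Qed.

Section ChainLevel.
Variable l : nat.
Hypothesis Hl : l < 7.
Let b : 'I_24 := inord l.
Let t (y : 'I_24) := trans_el l y.

Lemma val_base : (b : nat) = l.
Proof. by rewrite /b inordK // (leq_trans Hl). Qed.

Lemma chain_next_fix s : s \in chain_genset l.+1 -> s b = b.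
Proof.
case/chain_gensetP => i /(chain_gens_next Hl) [fix_l _] ->; apply: val_inj.
by rewrite /= -(lpermE (lperm_chain_el i)) val_base.
Qed.

Lemma trans_el_gen y : y \in orbit_ord l -> t y \in chain_group l.
Proof. by rewrite mem_orbit_ord // => /(trans_el_in Hl). Qed.

Lemma trans_el_base y : y \in orbit_ord l -> t y b = y.
Proof.
rewrite mem_orbit_ord //; move: (check_level_M24 Hl) => /and4P [_ _ /and3P [_ /allP maps _] _].
move=> /maps /eqP E; apply: val_inj.
by rewrite /= -(lpermE (lperm_trans_el _ _)) val_base.
Qed.

Lemma base_in_orbit : b \in orbit_ord l.
Proof.
rewrite mem_orbit_ord // val_base.
by move: (check_level_M24 Hl) => /and4P [_ /and4P [_ _ ? _] _ _].
Qed.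

Lemma trans_el_base1 : t b = 1%g.
Proof.
move: (check_level_M24 Hl) => /and4P [_ _ /and3P [/eqP id_l _ _] _].
by apply: (lperm_inj (lperm_trans_el l b)); rewrite val_base id_l; exact: lperm1.
Qed.

Lemma chain_schreier y s : y \in orbit_ord l -> s \in chain_genset l ->
  s y \in orbit_ord l /\ (t y * s * (t (s y))^-1)%g \in chain_group l.+1.
Proof.
rewrite mem_orbit_ord // => Hy /chain_gensetP [i Hi ->].
move: (check_level_M24 Hl) => /and4P [_ _ _ /allP /(_ _ Hy) /allP /(_ _ Hi) /andP [Hz Hs]].
have Ez : val (chain_el i y) = nth 0 (lel M24_slp_lists i) y.
  by rewrite (lpermE (lperm_chain_el i)).
rewrite mem_orbit_ord // Ez; split => //.
apply: (sift_chain_group _ _ Hs); first by rewrite subnKC.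
rewrite /t Ez; apply: lpermM; first apply: lpermM.
- exact: lperm_trans_el.
- exact: lperm_chain_el.
- exact: lpermV (lperm_trans_el _ _).
Qed.

Lemma chain_decomp g : g \in chain_group l ->
  exists2 h, h \in chain_group l.+1 & exists2 y, y \in orbit_ord l & g = (h * t y)%g.
Proof.
exact: (schreier_decomp (S := chain_genset l) base_in_orbit trans_el_base1 chain_schreier).
Qed.

Lemma chain_stab g : g \in chain_group l -> g b = b -> g \in chain_group l.+1.
Proof.
exact: (schreier_stab (S := chain_genset l) chain_next_fix trans_el_base base_in_orbit
  trans_el_base1 chain_schreier).
Qed.

Lemma card_chain_group : #|chain_group l| = (size (orbit_at l) * #|chain_group l.+1|)%N.
Proof.
move: (check_level_M24 Hl) => /and4P [_ /and4P [uniq_O /allP lt24 _ _] _ _].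
rewrite /chain_group (card_schreier chain_next_fix trans_el_gen trans_el_base
  base_in_orbit trans_el_base1 chain_schreier) ?size_map //.
  rewrite map_inj_in_uniq // => x y /lt24 Hx /lt24 Hy /(congr1 val).
  by rewrite /= !inordK.
apply/subsetP => _ /chain_gensetP [i Hi ->]; rewrite inE map_f //.
by case: (chain_gens_next Hl Hi).
Qed.

End ChainLevel.

Lemma chain_group7 : chain_group 7 = 1%g.
Proof.
by rewrite /chain_group (_ : chain_genset 7 = set0) ?gen0 //; apply/setP => x; rewrite !inE.
Qed.

Lemma chain_group0 : chain_group 0 = M24.
Proof.
apply/eqP; rewrite eqEsubset; apply/andP; split.
  by rewrite gen_subG; apply/subsetP => _ /chain_gensetP [i _ ->]; apply: chain_el_M24.
rewrite gen_subG; apply/subsetP => s Hs.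
have [j Hj ->] : exists2 j, j < 4 & s = nth 1%g M24_gens j.
  by move: Hs; rewrite !inE -!orbA => /or4P [] /eqP ->; [exists 0 | exists 1 | exists 2 | exists 3].
by rewrite -chain_el_gens // mem_chain_group // mem_cat; case: j Hj => [|[|[|[|j]]]].
Qed.

Lemma chain_group_M24 k : k <= 7 -> chain_group k \subset M24.
Proof.
elim: k => [|k IH] Hk; first by rewrite chain_group0.
exact: subset_trans (chain_group_sub Hk) (IH (ltnW Hk)).
Qed.

Lemma card_M24 : #|M24| = 24 * 23 * 22 * 21 * 20 * 48.
Proof.
rewrite -chain_group0; do 7 rewrite card_chain_group //.
rewrite chain_group7 cards1.
by rewrite !mulnA muln1.
Qed.

Lemma chain_group5_elem g : g \in chain_group 5 ->
  exists2 z, z \in orbit_ord 6 & exists2 y, y \in orbit_ord 5 & g = (trans_el 6 z * trans_el 5 y)%g.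
Proof.
case/chain_decomp => // h /chain_decomp [] // h' + [z Hz ->] [y Hy ->].
by rewrite chain_group7 => /set1gP ->; rewrite mul1g; exists z => //; exists y.
Qed.

Lemma lswapE (F v z : 'I_24) : lswap F v z = tperm F v z.
Proof.
rewrite /lswap; case: tpermP => [->|->|zF zv]; rewrite ?eqxx //.
  by case: eqP => [->|].
have /negbTE -> : val z != val F by apply/eqP => /val_inj.
by have /negbTE -> : val z != val v by apply/eqP => /val_inj.
Qed.

Lemma ltri_distE k g (F v : 'I_24) : lperm k g -> ltri_dist k F v = tri_dist g F v.
Proof.
move=> Hk; rewrite /tri_dist /hd cardE /enum_mem size_filter -enumT.
rewrite /ltri_dist -val_enum_ord count_map; apply: eq_count => z /=.
by rewrite inE /= permM !(lpermE Hk) !lswapE val_eqE.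
Qed.

Lemma tri_dist_chain_group5 g (F v : 'I_24) :
  g \in chain_group 5 -> g != 1%g -> 14 <= tri_dist g F v.
Proof.
case/chain_group5_elem => z Hz [y Hy ->] ne1.
have Hk := lpermM (lperm_trans_el 6 z) (lperm_trans_el 5 y).
move: check_all_M24; rewrite /check_all => /andP [_ /allP /(_ z)].
rewrite -mem_orbit_ord // => /(_ Hz) /allP /(_ y); rewrite -mem_orbit_ord // => /(_ Hy).
case/orP => [/eqP E | /allP /(_ F) ge14].
  by rewrite E in Hk; rewrite (lperm_inj Hk lperm1) eqxx in ne1.
have in24 (x : 'I_24) : (x : nat) \in iota 0 24 by rewrite mem_iota ltn_ord.
by move/allP: (ge14 (in24 F)) => /(_ v (in24 v)); rewrite (ltri_distE _ _ Hk).
Qed.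

Lemma fixed_point_above (c : {perm 'I_24}) k : k < 5 -> hd c 1 <= 19 ->
  exists2 y : 'I_24, c y = y & k <= y.
Proof.
move=> k5 c_small.
case: (pickP [pred y | (c y == y) && (k <= y)]) => [y /andP [/eqP cy ky] | none].
  by exists y.
exfalso.
have fix_small : #|[pred z | c z == z]| <= k.
  have sub : [pred z | c z == z] \subset [set (inord i : 'I_24) | i : 'I_k].
    apply/subsetP => z; rewrite inE => cz.
    have zk : z < k by rewrite ltnNge; move: (none z); rewrite /= cz; case: (k <= z).
    by apply/imsetP; exists (Ordinal zk); rewrite ?inE ?inord_val.
  apply: leq_trans (subset_leq_card sub) _.
  by apply: leq_trans (leq_imset_card _ _) _; rewrite card_ord.
have := cardC [pred z | c z == z]; rewrite card_ord.
rewrite (_ : #|[predC _]| = hd c 1) => [E|].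
  by have := leq_add fix_small c_small; rewrite E; lia.
by apply: eq_card => z; rewrite !inE perm1.
Qed.

Lemma conj_into_chain_group s k : s \in M24 -> hd s 1 <= 19 -> k <= 5 ->
  exists2 h, h \in M24 & (s ^ h)%g \in chain_group k.
Proof.
move=> sM s_small; elim: k => [|k IH] Hk.
  by exists 1%g; rewrite ?group1 // conjg1 chain_group0.
have Hk7 : k < 7 by apply: leq_trans Hk _.
have [h hM c_in] := IH (ltnW Hk).
have [y cy ky] : exists2 y : 'I_24, (s ^ h)%g y = y & k <= y.
  by apply: fixed_point_above => //; rewrite -(conj1g h) hd_conjg.
have y_orbit : y \in orbit_ord k.
  move: (check_level_M24 Hk7) => /and4P [_ /and4P [_ _ _ /implyP full] _ _].
  by rewrite mem_orbit_ord //; move/allP: (full Hk) => /(_ y); rewrite mem_iota ltn_ord ky; apply.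
pose u := trans_el k y.
have u_in : u \in chain_group k by apply: trans_el_gen y_orbit.
exists (h * u^-1)%g.
  by rewrite groupM ?groupV //; apply: (subsetP (chain_group_M24 (ltnW Hk7))).
rewrite conjgM; apply: chain_stab => //; first by rewrite groupJ ?groupV.
rewrite conjgE invgK !permM (trans_el_base Hk7 y_orbit).
by move: cy; rewrite conjgE !permM => ->; rewrite -(trans_el_base Hk7 y_orbit) permK.
Qed.

Theorem M24_tri_dist s (F v : 'I_24) : s \in M24 -> s != 1%g -> 14 <= tri_dist s F v.
Proof.
move=> sM s1; case: (leqP (hd s 1) 19) => [s_small | s_large].
  have [h hM Hk] := conj_into_chain_group sM s_small (leqnn 5).
  rewrite -(tri_dist_conjg h); apply: tri_dist_chain_group5 => //.
  by apply: contra s1 => /eqP /(congr1 (conjg^~ (h^-1)%g)); rewrite conjgK conj1g => ->.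
by have := hd1_le_tri_dist s F v; lia.
Qed.

Lemma tri_minus_M24_hd F p q : p \in M24 -> q \in M24 -> p != q ->
  14 <= hd (tri_minus F p) (tri_minus F q).
Proof.
move=> pM qM pq; rewrite hd_tri_minus_dist; apply: M24_tri_dist; first by rewrite groupM ?groupV.
by apply: contra pq => /eqP /(congr1 (fun r => q * r)%g); rewrite mulgA mulgV mul1g mulg1 => ->.
Qed.

Lemma tri_minus_M24_code F : code 14 (tri_minus_set F M24).
Proof.
move=> _ _ /imsetP [p pM ->] /imsetP [q qM ->] ne.
by apply: tri_minus_M24_hd => //; apply: contra ne => /eqP ->.
Qed.

Lemma card_tri_minus_M24 F : #|tri_minus_set F M24| = #|M24|.
Proof.
apply: card_in_imset => p q pM qM E; apply/eqP; apply: contraT => ne.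
by have := tri_minus_M24_hd F pM qM ne; rewrite E hdxx.
Qed.

Theorem proposition18 (F : 'I_24) :
  [/\ 14 <= hdset (tri_minus_set F M24),
      #|M24| = 24 * 23 * 22 * 21 * 20 * 48 /\ #|M24| <= Mnd 23 14,
      #|M24| %/ 23 <= Mnd 22 14
    & #|M24| %/ (23 * 22) <= Mnd 21 14].
Proof.
have card_ThetaF : #|ThetaF F| = 23 by rewrite card_sig_neq card_ord.
have M23 : #|M24| <= Mnd 23 14.
  by rewrite -(@card_tri_minus_M24 F); exact: Mnd_ge_code card_ThetaF (@tri_minus_M24_code F).
have M22 : #|M24| %/ 23 <= Mnd 22 14.
  exact: leq_trans (leq_div2r 23 M23) (@Mnd_shorten 22 14 isT).
split=> //.
- by apply: hdset_ge_code (@tri_minus_M24_code F); rewrite card_ThetaF.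
- by split; first exact: card_M24.
by rewrite divnMA; apply: leq_trans (leq_div2r 22 M22) (@Mnd_shorten 21 14 isT).
Qed.
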